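(* Let $(V_1,\dots,V_n)$ be an $n$-tuple of doubly non-commuting isometries on $H$ such that $V_1,\dots,V_n$ are all pure isometries and $\bigcap_{i=1}^n\ker V_i^*$ is finite-dimensional. Let $T\in B(H)$ be such that, for each $i=1,\dots,n$, $TV_i=\tau_iV_iT$ for some $\tau_i\in\mathbb T$ and $T(\ker V_i^* )\subseteq\ker V_i^*$. If the restriction of $T$ to $\bigcap_{i=1}^n\ker V_i^*$ has trivial kernel, then $T(H)=H$.
   Context: Fix $n\ge1$ and $z_{ij}\in\mathbb T$ ($i\ne j$) with $z_{ji}=\overline{z_{ij}}$; $(V_1,\dots,V_n)$ is doubly non-commuting if the $V_i$ are isometries with $V_i^*V_j=\overline{z_{ij}}V_jV_i^*$ for $i\ne j$. An isometry $S$ on $H$ is a pure isometry if $\{0\}$ is the only $S$-invariant subspace of $H$ on which $S$ is unitary. *)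

From HB Require Import structures.
From mathcomp Require Import all_boot all_order all_algebra.
From mathcomp Require Import reals.
From mathcomp Require Export complex.
Set Implicit Arguments. Unset Strict Implicit. Unset Printing Implicit Defensive.
Import Order.TTheory GRing.Theory Num.Theory.
Local Open Scope ring_scope.

Section Hilbert.
Variable R : realType.
Local Notation C := (R[i]).
Variable H : lmodType C.
Variable ip : H -> H -> C.

Definition inner_product : Prop :=
  [/\ forall (a : C) (x y z : H), ip (a *: x + y) z = a * ip x z + ip y z,
      forall x y : H, ip y x = (ip x y)^*,
      forall x : H, 0 <= ip x x &
      forall x : H, ip x x = 0 -> x = 0].

Definition hnorm (x : H) : C := sqrtC (ip x x).

Definition cauchy_seq (u : nat -> H) : Prop :=
  forall e : C, 0 < e -> exists N : nat,
    forall m k : nat, (N <= m)%N -> (N <= k)%N -> hnorm (u m - u k) < e.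

Definition converges_to (u : nat -> H) (l : H) : Prop :=
  forall e : C, 0 < e -> exists N : nat,
    forall m : nat, (N <= m)%N -> hnorm (u m - l) < e.

Definition hilbert_space : Prop :=
  inner_product /\
  forall u : nat -> H, cauchy_seq u -> exists l : H, converges_to u l.

Definition bounded (T : H -> H) : Prop :=
  exists M : C, forall x : H, hnorm (T x) <= M * hnorm x.

Definition is_adjoint (B A : H -> H) : Prop :=
  forall x y : H, ip (B x) y = ip x (A y).

Definition isometry (V : H -> H) : Prop :=
  forall x : H, hnorm (V x) = hnorm x.

Definition closed_subspace (M : H -> Prop) : Prop :=
  [/\ M 0,
      forall (a : C) (x y : H), M x -> M y -> M (a *: x + y) &
      forall (u : nat -> H) (l : H), (forall k, M (u k)) -> converges_to u l -> M l].

(* S is a pure isometry: {0} is the only S-invariant (closed) subspace on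
   which S is unitary (i.e. S restricted to M maps M onto M). *)
Definition pure_isometry (S : H -> H) : Prop :=
  isometry S /\
  forall M : H -> Prop, closed_subspace M ->
    (forall x, M x -> M (S x)) ->
    (forall y, M y -> exists2 x, M x & S x = y) ->
    forall x, M x -> x = 0.

Definition finite_dimensional (W : H -> Prop) : Prop :=
  exists s : seq H, forall x : H, W x ->
    exists c : nat -> C, x = \sum_(k < size s) c k *: s`_k.

Definition doubly_noncommuting (n : nat) (z : 'I_n -> 'I_n -> C)
    (V Vs : 'I_n -> H -> H) : Prop :=
  [/\ forall i j, i != j -> `|z i j| = 1,
      forall i j, i != j -> z j i = (z i j)^*,
      forall i, isometry (V i),
      forall i, is_adjoint (V i) (Vs i) &
      forall i j, i != j -> forall x, Vs i (V j x) = (z i j)^* *: V j (Vs i x)].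

End Hilbert.

From Pilot Require Import Defs.
From HB Require Import structures.
From mathcomp Require Import all_boot all_order all_algebra.
From mathcomp Require Import boolp classical_sets reals complex.
From mathcomp Require Import ring lra.
Import Order.TTheory GRing.Theory Num.Theory.
Local Open Scope ring_scope.
Set Implicit Arguments. Unset Strict Implicit. Unset Printing Implicit Defensive.

(* Induction on m through the closed subspaces
   H_m = {x | V_i^* x = 0 for all i >= m}, from the finite-dimensional joint
   kernel H_0 up to H_n = H, showing that T maps H_m onto H_m with a bound
   ||x||^2 <= K ||T x||^2 on some preimage x.  On H_0 this is linear algebra:
   T is injective on a finite-dimensional invariant space.  For the step,
   double non-commutation makes H_(m+1) reduce V_m, and H_(m+1) /\ ker V_m^*
   = H_m.  As V_m is pure, the Wold decomposition writes y in H_(m+1) as an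
   orthogonal series sum_k V_m^k u_k with u_k in H_m; if T x_k = u_k with
   x_k in H_m, then T V_m = tau_m V_m T turns sum_k conj(tau_m)^k V_m^k x_k
   into a preimage of y, and the bound on the x_k is what makes this series
   converge. *)

Lemma iter_stable (T : Type) (P : T -> Prop) (f : T -> T) k x :
  (forall x, P x -> P (f x)) -> P x -> P (iter k f x).
Proof. by move=> Pf Px; elim: k => //= k; apply: Pf. Qed.

Section LinearIter.
Variables (R : pzRingType) (U : lmodType R) (f : {linear U -> U}).

Lemma iter_is_linear k : linear (iter k f).
Proof. by elim: k => [|k IH] a x y //=; rewrite IH linearP. Qed.

HB.instance Definition _ k :=
  GRing.isLinear.Build R U U *:%R (iter k f) (iter_is_linear k).

End LinearIter.

Lemma nonincreasing_le (R : realDomainType) (b : nat -> R) :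
  (forall k, b k.+1 <= b k) -> forall m k, (m <= k)%N -> b k <= b m.
Proof.
move=> bS m k; apply: (homo_leq (r := fun x y => y <= x)) => //.
by move=> y x t hyx hty; apply: le_trans hty hyx.
Qed.

Lemma nonincreasing_cauchy (R : realType) (b : nat -> R) :
  (forall k, 0 <= b k) -> (forall k, b k.+1 <= b k) ->
  forall e, 0 < e -> exists N, forall m k, (N <= m)%N -> (m <= k)%N -> b m - b k < e.
Proof.
move=> b0 bS e e0.
pose E := [set - b k | k in [set: nat]]%classic.
have supE : has_sup E.
  by split; [exists (- b 0%N), 0%N | exists 0 => _ [k _ <-]; rewrite oppr_le0].
have [_ [N _ <-] hN] := sup_adherent e0 supE.
exists N => m k hm hmk.
have := sup_upper_bound supE (ex_intro2 _ _ k I erefl).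
have := nonincreasing_le bS hm; lra.
Qed.

Section Subspace.
Variables (K : pzRingType) (H : lmodType K).

Definition subspace (W : H -> Prop) :=
  W 0 /\ forall c a b, W a -> W b -> W (c *: a + b).

Variable W : H -> Prop.
Hypothesis Wsub : subspace W.

Lemma subspace0 : W 0.
Proof. by case: Wsub. Qed.

Lemma subspaceP c a b : W a -> W b -> W (c *: a + b).
Proof. by case: Wsub => _; apply. Qed.

Lemma subspaceD a b : W a -> W b -> W (a + b).
Proof. by move=> Wa Wb; rewrite -(scale1r a); apply: subspaceP. Qed.

Lemma subspaceZ c a : W a -> W (c *: a).
Proof. by move=> Wa; rewrite -[_ *: _]addr0; apply: subspaceP Wa subspace0. Qed.

Lemma subspaceB a b : W a -> W b -> W (a - b).
Proof. by move=> Wa Wb; rewrite -scaleN1r addrC; apply: subspaceP. Qed.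

Lemma subspace_sum I (r : seq I) (P : pred I) (F : I -> H) :
  (forall i, P i -> W (F i)) -> W (\sum_(i <- r | P i) F i).
Proof. by move=> WF; apply: big_ind => //; [exact: subspace0 | exact: subspaceD]. Qed.

End Subspace.

Lemma subspaceI (K : pzRingType) (H : lmodType K) (W W' : H -> Prop) :
  subspace W -> subspace W' -> subspace (fun x => W x /\ W' x).
Proof.
move=> Wsub W'sub; split.
  by split; [apply: (subspace0 Wsub) | apply: (subspace0 W'sub)].
move=> c a b [Wa W'a] [Wb W'b].
by split; [apply: (subspaceP Wsub) | apply: (subspaceP W'sub)].
Qed.

Section Span.
Variables (K : pzRingType) (H : lmodType K).

Definition span (s : seq H) x :=
  exists c : 'I_(size s) -> K, x = \sum_(k < size s) c k *: s`_k.

Lemma span_subspace s : subspace (span s).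
Proof.
split; first by exists (fun=> 0); rewrite big1 // => k _; rewrite scale0r.
move=> c _ _ [a ->] [b ->]; exists (fun k => c * a k + b k).
by rewrite scaler_sumr -big_split; apply: eq_bigr => k _; rewrite scalerDl scalerA.
Qed.

Lemma mem_span s (k : 'I_(size s)) : span s s`_k.
Proof.
exists (fun j => (j == k)%:R); rewrite (bigD1 k) //= eqxx scale1r big1 ?addr0 //.
by move=> j /negbTE ->; rewrite scale0r.
Qed.

Lemma span_cons a s x : span s x -> span (a :: s) x.
Proof.
case=> c ->; exists (fun k => if unlift ord0 k is Some j then c j else 0).
rewrite /= big_ord_recl unlift_none scale0r add0r.
by apply: eq_bigr => k _; rewrite liftK.
Qed.

Lemma span_min s (W : H -> Prop) : subspace W ->
  (forall k : 'I_(size s), W s`_k) -> forall x, span s x -> W x.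
Proof.
by move=> Wsub Ws x [c ->]; apply: (subspace_sum Wsub) => k _; apply: (subspaceZ Wsub).
Qed.

Lemma span_cons_inv a s y :
  span (a :: s) y -> exists c, span s (y - c *: a).
Proof.
case=> c ->; exists (c ord0); rewrite /= big_ord_recl /= addrAC subrr add0r.
by exists (fun k => c (lift ord0 k)).
Qed.

End Span.

Lemma span_exchange (F : fieldType) (H : lmodType F) a (s : seq H) w x :
  span (a :: s) x -> span (a :: s) w -> ~ span s w -> exists g, span s (x - g *: w).
Proof.
move=> /span_cons_inv [cx sx] /span_cons_inv [cw sw] nsw.
have cw0 : cw != 0 by apply/eqP => cw0; apply: nsw; rewrite cw0 scale0r subr0 in sw.
exists (cx / cw).
have -> : x - cx / cw *: w = (x - cx *: a) - cx / cw *: (w - cw *: a).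
  by rewrite scalerBr scalerA divfK // opprB addrA subrK.
by apply: (subspaceB (span_subspace s)) sx _; apply: (subspaceZ (span_subspace s)).
Qed.

Section InnerProduct.
Variables (R : realType) (H : lmodType R[i]) (ip : H -> H -> R[i]).
Hypothesis ipP : inner_product ip.
Local Notation "x %:C" := (real_complex R x).

Lemma ipC x y : ip y x = (ip x y)^*.
Proof. by case: ipP. Qed.

Lemma ip_ge0 x : 0 <= ip x x.
Proof. by case: ipP. Qed.

Lemma ip_eq0 x : ip x x = 0 -> x = 0.
Proof. by case: ipP => _ _ _; apply. Qed.

Lemma ipPl a x y z : ip (a *: x + y) z = a * ip x z + ip y z.
Proof. by case: ipP. Qed.

Lemma ipDl x y z : ip (x + y) z = ip x z + ip y z.
Proof. by rewrite -{1}(scale1r x) ipPl mul1r. Qed.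

Lemma ip0l z : ip 0 z = 0.
Proof. by apply: (addIr (ip 0 z)); rewrite -ipDl !add0r. Qed.

Lemma ipZl a x z : ip (a *: x) z = a * ip x z.
Proof. by rewrite -(addr0 (a *: x)) ipPl ip0l addr0. Qed.

Lemma ipNl x z : ip (- x) z = - ip x z.
Proof. by rewrite -scaleN1r ipZl mulN1r. Qed.

Lemma ipBl x y z : ip (x - y) z = ip x z - ip y z.
Proof. by rewrite ipDl ipNl. Qed.

Lemma ipDr z x y : ip z (x + y) = ip z x + ip z y.
Proof. by rewrite ipC ipDl rmorphD /= -!ipC. Qed.

Lemma ipZr z a x : ip z (a *: x) = a^* * ip z x.
Proof. by rewrite ipC ipZl rmorphM /= -ipC. Qed.

Lemma ip0r z : ip z 0 = 0.
Proof. by rewrite ipC ip0l rmorph0. Qed.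

Lemma ipNr z x : ip z (- x) = - ip z x.
Proof. by rewrite ipC ipNl rmorphN /= -ipC. Qed.

Lemma ipBr z x y : ip z (x - y) = ip z x - ip z y.
Proof. by rewrite ipDr ipNr. Qed.

Lemma ip_suml I (r : seq I) (P : pred I) (F : I -> H) z :
  ip (\sum_(i <- r | P i) F i) z = \sum_(i <- r | P i) ip (F i) z.
Proof. exact: (big_morph (ip^~ z) (fun x y => ipDl x y z) (ip0l z)). Qed.

Lemma ip_sumr I (r : seq I) (P : pred I) (F : I -> H) z :
  ip z (\sum_(i <- r | P i) F i) = \sum_(i <- r | P i) ip z (F i).
Proof. exact: (big_morph (ip z) (ipDr z) (ip0r z)). Qed.

Lemma ip_selfDZ u v c : ip (u + c *: v) (u + c *: v) =
  ip u u + c^* * ip u v + c * ip v u + c * c^* * ip v v.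
Proof. by rewrite !(ipDl, ipDr, ipZl, ipZr); ring. Qed.

(* Squared norm as a real number: all estimates are made on squares. *)
Definition nsq x := complex.Re (ip x x).

Lemma ip_nsq x : ip x x = (nsq x)%:C.
Proof. by rewrite /nsq RRe_real // ger0_real // ip_ge0. Qed.

Lemma nsq_ge0 x : 0 <= nsq x.
Proof. by rewrite -ler0c -ip_nsq ip_ge0. Qed.

Lemma nsq_eq0 x : nsq x = 0 -> x = 0.
Proof. by move=> h; apply: ip_eq0; rewrite ip_nsq h. Qed.

Lemma nsq0 : nsq 0 = 0.
Proof. by rewrite /nsq ip0l. Qed.

Lemma nsqN x : nsq (- x) = nsq x.
Proof. by rewrite /nsq ipNl ipNr opprK. Qed.

Lemma nsqB x y : nsq (x - y) = nsq (y - x).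
Proof. by rewrite -nsqN opprB. Qed.

Lemma nsqZ_unit c x : `|c| = 1 -> nsq (c *: x) = nsq x.
Proof.
move=> c1; apply: (@complexI R); rewrite -!ip_nsq ipZl ipZr mulrA.
by rewrite -normCK c1 expr1n mul1r.
Qed.

Lemma nsqD_le x y : nsq (x + y) <= 2 * nsq x + 2 * nsq y.
Proof.
have parallelogram : nsq (x + y) + nsq (x - y) = 2 * nsq x + 2 * nsq y.
  apply: (@complexI R); rewrite !rmorphD !rmorphM /= -!ip_nsq rmorph_nat.
  by rewrite !(ipDl, ipDr, ipNl, ipNr); ring.
by rewrite -parallelogram lerDl nsq_ge0.
Qed.

Lemma hnormE x : hnorm ip x = (Num.sqrt (nsq x))%:C.
Proof.
rewrite /hnorm ip_nsq -{1}(sqr_sqrtr (nsq_ge0 x)) rmorphXn sqrCK //.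
by rewrite ler0c sqrtr_ge0.
Qed.

Lemma ip_hnorm x : ip x x = hnorm ip x ^+ 2.
Proof. by rewrite hnormE -rmorphXn sqr_sqrtr ?nsq_ge0 // ip_nsq. Qed.

Lemma hnorm_ge0 x : 0 <= hnorm ip x.
Proof. by rewrite hnormE ler0c sqrtr_ge0. Qed.

Lemma hnorm_ltcR x (r : R) : 0 < r -> (hnorm ip x < r%:C) = (nsq x < r ^+ 2).
Proof.
move=> r0; rewrite hnormE ltcR -{1}(ger0_norm (ltW r0)) -sqrtr_sqr.
by rewrite ltr_sqrt // exprn_gt0.
Qed.

Lemma nsq_sum_orthogonal (w : nat -> H) N M :
  (forall j k, j <> k -> ip (w j) (w k) = 0) ->
  nsq (\sum_(N <= k < M) w k) = \sum_(N <= k < M) nsq (w k).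
Proof.
move=> worth; elim: M => [|M IH]; first by rewrite !big_geq // nsq0.
have [hNM|hMN] := leqP N M; last by rewrite !big_geq ?nsq0.
rewrite !big_nat_recr //= -IH.
have orth_last : ip (\sum_(N <= k < M) w k) (w M) = 0.
  rewrite ip_suml big1_seq // => k /andP[_]; rewrite mem_index_iota => /andP[_ hk].
  by apply: worth => ekM; move: hk; rewrite ekM ltnn.
apply: (@complexI R); rewrite rmorphD /= -!ip_nsq ipDl !ipDr.
by rewrite orth_last [ip (w M) _]ipC orth_last conjC0 addr0 add0r.
Qed.

Lemma bounded_nsq (T : {linear H -> H}) :
  bounded ip T -> exists B : R, 0 <= B /\ forall x, nsq (T x) <= B * nsq x.
Proof.
case=> M hM; exists (complex.Re M ^+ 2); split=> [|x]; first exact: sqr_ge0.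
move: (hM x); rewrite !hnormE; case: M {hM} => a b.
rewrite lecE /= => /andP[_]; rewrite mulr0 subr0 => hTx.
rewrite -(sqr_sqrtr (nsq_ge0 (T x))) -(sqr_sqrtr (nsq_ge0 x)) -exprMn.
by rewrite lerXn2r ?nnegrE ?sqrtr_ge0 // (le_trans _ hTx) ?sqrtr_ge0.
Qed.

Lemma ip_eq_scale a b d : `|d| = 1 ->
  ip a a = ip b b -> ip a b = d * ip b b -> a = d *: b.
Proof.
move=> d1 aa ab; apply/subr0_eq/ip_eq0; rewrite -scaleNr ip_selfDZ aa ab.
rewrite [ip b a]ipC ab rmorphM /= (conj_Creal (ger0_real (ip_ge0 b))).
rewrite !rmorphN /=; transitivity (ip b b * (1 - d * d^*)); first by ring.
by rewrite -normCK d1 expr1n subrr mulr0.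
Qed.

Definition nsq_cvg (u : nat -> H) l := forall e : R, 0 < e ->
  exists N, forall m, (N <= m)%N -> nsq (u m - l) < e.

Definition nsq_cauchy (u : nat -> H) := forall e : R, 0 < e ->
  exists N, forall m k, (N <= m)%N -> (N <= k)%N -> nsq (u m - u k) < e.

Lemma gt0_complexR (e : R[i]) : 0 < e -> e = (complex.Re e)%:C /\ 0 < complex.Re e.
Proof.
move=> e0; split; first by rewrite RRe_real // gtr0_real.
by move: e0; rewrite ltcE => /andP[].
Qed.

Lemma converges_toP u l : converges_to ip u l <-> nsq_cvg u l.
Proof.
split=> [ul e e0 | ul e /gt0_complexR [-> e0]].
  have [|N hN] := ul (Num.sqrt e)%:C; first by rewrite ltcR sqrtr_gt0.
  by exists N => m /hN; rewrite hnorm_ltcR ?sqrtr_gt0 // sqr_sqrtr // ltW.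
have [N hN] := ul _ (exprn_gt0 2 e0).
by exists N => m /hN; rewrite hnorm_ltcR.
Qed.

Lemma hilbert_complete u :
  hilbert_space ip -> nsq_cauchy u -> exists l, nsq_cvg u l.
Proof.
case=> _ complete ucauchy.
have [|l /converges_toP] := complete u; last by exists l.
move=> e /gt0_complexR [-> e0]; have [N hN] := ucauchy _ (exprn_gt0 2 e0).
by exists N => m k hm hk; rewrite hnorm_ltcR // hN.
Qed.

Lemma nsq_cvg_unique u a b : nsq_cvg u a -> nsq_cvg u b -> a = b.
Proof.
move=> ua ub; apply/subr0_eq/nsq_eq0/eqP; rewrite eq_le nsq_ge0 andbT.
apply/ler_addgt0Pr => e e0; rewrite add0r.
have [Na hNa] := ua _ (divr_gt0 e0 (ltr0n _ 4)).
have [Nb hNb] := ub _ (divr_gt0 e0 (ltr0n _ 4)).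
set w := u (maxn Na Nb).
have := hNa _ (leq_maxl Na Nb); have := hNb _ (leq_maxr Na Nb).
have -> : a - b = (w - b) + (a - w) by rewrite [RHS]addrC addrA subrK.
have := nsqD_le (w - b) (a - w); rewrite [nsq (a - w)]nsqB; lra.
Qed.

Lemma nsq_cvg_eventually u v l N :
  (forall m, (N <= m)%N -> u m = v m) -> nsq_cvg u l -> nsq_cvg v l.
Proof.
move=> uv ul e /ul [M hM]; exists (maxn M N) => m.
by rewrite geq_max => /andP[/hM + /uv <-].
Qed.

Lemma nsq_cvg_map (F : {additive H -> H}) (B : R) u l :
  0 <= B -> (forall x, nsq (F x) <= B * nsq x) ->
  nsq_cvg u l -> nsq_cvg (F \o u) (F l).
Proof.
move=> B0 FB ul e e0; have B1 : 0 < B + 1 by rewrite ltr_wpDl.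
have [N hN] := ul _ (divr_gt0 e0 B1); exists N => m /hN hm /=.
have : (B + 1) * nsq (u m - l) < e by rewrite mulrC -ltr_pdivlMr.
rewrite -raddfB mulrDl mul1r; have := FB (u m - l); have := nsq_ge0 (u m - l).
lra.
Qed.

Lemma nsq_cvg_cst l : nsq_cvg (fun=> l) l.
Proof. by move=> e e0; exists 0%N => m _; rewrite subrr nsq0. Qed.

Lemma nsq_cvg_map_lim (F : {additive H -> H}) (B : R) u v l a N :
  0 <= B -> (forall x, nsq (F x) <= B * nsq x) ->
  (forall m, (N <= m)%N -> F (u m) = v m) ->
  nsq_cvg u l -> nsq_cvg v a -> F l = a.
Proof.
move=> B0 FB Fuv ul va; apply: nsq_cvg_unique va.
exact: nsq_cvg_eventually Fuv (nsq_cvg_map B0 FB ul).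
Qed.

Lemma nsq_cauchy_dominated u (b : nat -> R) (K : R) :
  0 <= K -> (forall k, 0 <= b k) -> (forall k, b k.+1 <= b k) ->
  (forall N M, (N <= M)%N -> nsq (u M - u N) <= K * (b N - b M)) ->
  nsq_cauchy u.
Proof.
move=> K0 b0 bS ub e e0; have K1 : 0 < K + 1 by rewrite ltr_wpDl.
have [N hN] := nonincreasing_cauchy b0 bS (divr_gt0 e0 K1).
have lt_e m k : (N <= m)%N -> (m <= k)%N -> nsq (u k - u m) < e.
  move=> Nm mk; apply: le_lt_trans (ub _ _ mk) _.
  have := hN _ _ Nm mk; rewrite ltr_pdivlMr // => hbe.
  have := nonincreasing_le bS mk; rewrite -subr_ge0; nra.
exists N => m k Nm Nk; have [mk|/ltnW km] := leqP m k.
  by rewrite nsqB lt_e.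
exact: lt_e.
Qed.

Lemma nsq_cvg_bound u l (C : R) :
  nsq_cvg u l -> (forall m, nsq (u m) <= C) -> nsq l <= 2 * C.
Proof.
move=> ul uC; apply/ler_addgt0Pr => e e0.
have [N hN] := ul _ (divr_gt0 e0 (ltr0n _ 2)).
have := nsqD_le (u N) (l - u N); rewrite addrC subrK nsqB.
have := hN N (leqnn N); have := uC N; lra.
Qed.

Lemma closed_subspace_subspace S : closed_subspace ip S -> subspace S.
Proof. by case. Qed.

Lemma closed_subspace_lim S u l :
  closed_subspace ip S -> (forall k, S (u k)) -> nsq_cvg u l -> S l.
Proof. by case=> _ _ Slim Su /converges_toP; apply: Slim. Qed.

End InnerProduct.

Section Isometry.
Variables (R : realType) (H : lmodType R[i]) (ip : H -> H -> R[i]).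
Hypothesis ipP : inner_product ip.
Local Notation nsq := (nsq ip).

Lemma polarization x y : 4 * ip x y =
  ip (x + y) (x + y) - ip (x - y) (x - y)
  + 'i * ip (x + 'i *: y) (x + 'i *: y) - 'i * ip (x - 'i *: y) (x - 'i *: y).
Proof.
rewrite !(ipDl ipP, ipDr ipP, ipNl ipP, ipNr ipP, ipZl ipP, ipZr ipP) conjCi.
apply/eqP; rewrite -subr_eq0; apply/eqP.
transitivity (2 * (1 + 'i ^+ 2) * (ip x y - ip y x)); first by ring.
by rewrite sqrCi addrN mulr0 mul0r.
Qed.

Variables V Vs : {linear H -> H}.
(* Unqualified, [isometry] would be the sesquilinear-form notion of mathcomp. *)
Hypothesis Viso : Defs.isometry ip V.
Hypothesis Vadj : is_adjoint ip V Vs.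

Lemma nsq_iso x : nsq (V x) = nsq x.
Proof.
have := Viso x; rewrite !(hnormE ipP) => /complexI /(congr1 (fun r => r ^+ 2)).
by rewrite !sqr_sqrtr ?(nsq_ge0 ipP).
Qed.

Lemma ip_iso x y : ip (V x) (V y) = ip x y.
Proof.
have ipVV w : ip (V w) (V w) = ip w w by rewrite !(ip_nsq ipP) nsq_iso.
apply: (mulfI (_ : 4 != 0)); first by rewrite pnatr_eq0.
by rewrite !polarization -!linearZ -!linearD -!linearB !ipVV.
Qed.

Lemma adj_isoK x : Vs (V x) = x.
Proof.
apply/subr0_eq/(ip_eq0 ipP).
by rewrite (ipBr ipP) -Vadj ip_iso subrr.
Qed.

Lemma nsqB_range y : nsq (y - V (Vs y)) = nsq y - nsq (Vs y).
Proof.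
apply: (@complexI R); rewrite rmorphB /= -!(ip_nsq ipP).
rewrite !(ipBl ipP, ipBr ipP) ip_iso Vadj [ip y (V _)](ipC ipP) Vadj.
by rewrite (conj_Creal (ger0_real (ip_ge0 ipP _))); ring.
Qed.

Lemma nsq_adj_le y : nsq (Vs y) <= nsq y.
Proof. by rewrite -subr_ge0 -nsqB_range nsq_ge0. Qed.

Lemma ip_iter_iso k x y : ip (iter k V x) (iter k V y) = ip x y.
Proof. by elim: k => //= k IH; rewrite ip_iso. Qed.

Lemma ip_iter_adj k x y : ip (iter k V x) y = ip x (iter k Vs y).
Proof. by elim: k x => // k IH x; rewrite iterSr IH Vadj -iterS. Qed.

Lemma iter_adj_isoK j k x : (j <= k)%N -> iter j Vs (iter k V x) = iter (k - j) V x.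
Proof.
elim: j k => [|j IH] [|k] // jk.
by rewrite iterSr iterS adj_isoK subSS IH.
Qed.

Lemma ip_iter_ker j k x y : Vs x = 0 -> Vs y = 0 -> j <> k ->
  ip (iter j V x) (iter k V y) = 0.
Proof.
have lt_ker j' k' x' y' : Vs x' = 0 -> (j' < k')%N ->
    ip (iter j' V x') (iter k' V y') = 0.
  move=> x0 jk; rewrite ip_iter_adj iter_adj_isoK 1?ltnW // -(subnSK jk) iterS.
  by rewrite (ipC ipP) Vadj x0 (ip0r ipP) conjC0.
move=> x0 y0 /eqP; rewrite neq_ltn => /orP[]; first exact: lt_ker.
by move=> kj; rewrite (ipC ipP) lt_ker // conjC0.
Qed.

Lemma nsq_iter_iso k x : nsq (iter k V x) = nsq x.
Proof. by apply: (@complexI R); rewrite -!(ip_nsq ipP) ip_iter_iso. Qed.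

Lemma nsq_sum_wandering (a : nat -> H) N M : (forall k, Vs (a k) = 0) ->
  nsq (\sum_(N <= k < M) iter k V (a k)) = \sum_(N <= k < M) nsq (a k).
Proof.
move=> a0; rewrite (nsq_sum_orthogonal ipP) => [|j k]; last exact: ip_iter_ker.
by apply: eq_bigr => k _; rewrite nsq_iter_iso.
Qed.

Lemma nsq_iter_adj_le k x : nsq (iter k Vs x) <= nsq x.
Proof. by elim: k => //= k IH; apply: le_trans (nsq_adj_le _) IH. Qed.

(* The component of y in V^k (ker V^* ) of the Wold decomposition. *)
Definition wold_term y k := iter k Vs y - V (iter k.+1 Vs y).

Lemma adj_wold_term y k : Vs (wold_term y k) = 0.
Proof. by rewrite linearB /= adj_isoK -iterS subrr. Qed.

Lemma nsq_wold_term y k :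
  nsq (wold_term y k) = nsq (iter k Vs y) - nsq (iter k.+1 Vs y).
Proof. by rewrite /wold_term iterS nsqB_range. Qed.

Lemma wold_sum y N M : (N <= M)%N ->
  \sum_(N <= k < M) iter k V (wold_term y k) =
  iter N V (iter N Vs y) - iter M V (iter M Vs y).
Proof.
move=> NM; rewrite (telescope_sumr_eq (fun k => - iter k V (iter k Vs y)) _ NM) //.
  by rewrite opprK addrC.
by move=> k _; rewrite linearB /= -iterSr opprK addrC.
Qed.

Lemma sum_nsq_wold_term y N M : (N <= M)%N ->
  \sum_(N <= k < M) nsq (wold_term y k) = nsq (iter N Vs y) - nsq (iter M Vs y).
Proof.
move=> NM; rewrite (telescope_sumr_eq (fun k => - nsq (iter k Vs y)) _ NM) //.
  by rewrite opprK addrC.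
by move=> k _; rewrite nsq_wold_term opprK addrC.
Qed.

Lemma nsq_wold_diff y N M : (N <= M)%N ->
  nsq (iter N V (iter N Vs y) - iter M V (iter M Vs y)) =
  nsq (iter N Vs y) - nsq (iter M Vs y).
Proof.
move=> NM; rewrite -wold_sum // nsq_sum_wandering ?sum_nsq_wold_term //.
exact: adj_wold_term.
Qed.

Lemma wold_cauchy y : nsq_cauchy ip (fun k => iter k V (iter k Vs y)).
Proof.
apply: (nsq_cauchy_dominated (b := fun k => nsq (iter k Vs y)) ipP ler01).
- by move=> k; apply: nsq_ge0.
- by move=> k; rewrite iterS nsq_adj_le.
- by move=> N M NM; rewrite (nsqB ipP) nsq_wold_diff // mul1r.
Qed.

Hypothesis Hhilbert : hilbert_space ip.

Lemma wandering_series y (a : nat -> H) (K : R) : 0 <= K ->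
  (forall k, Vs (a k) = 0) -> (forall k, nsq (a k) <= K * nsq (wold_term y k)) ->
  exists x, nsq_cvg ip (fun N => \sum_(0 <= k < N) iter k V (a k)) x /\
            nsq x <= 2 * K * nsq y.
Proof.
move=> K0 a0 a_le; pose X N := \sum_(0 <= k < N) iter k V (a k).
have XD N M : (N <= M)%N ->
    nsq (X M - X N) <= K * (nsq (iter N Vs y) - nsq (iter M Vs y)).
  move=> NM; rewrite /X (big_cat_nat (leq0n N) NM) /= addrAC subrr add0r.
  rewrite nsq_sum_wandering // -sum_nsq_wold_term // mulr_sumr.
  exact: ler_sum (fun k _ => a_le k).
have decr k : nsq (iter k.+1 Vs y) <= nsq (iter k Vs y) by rewrite iterS nsq_adj_le.
have [x Xx] := hilbert_complete ipP Hhilbert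
  (nsq_cauchy_dominated ipP K0 (fun k => nsq_ge0 ipP _) decr XD).
exists x; split=> //; rewrite -mulrA; apply: (nsq_cvg_bound ipP Xx) => N.
have := XD 0%N N (leq0n N); rewrite /X [X in _ - X]big_geq // subr0 => /le_trans.
by apply; rewrite ler_wpM2l // gerBl nsq_ge0.
Qed.

Hypothesis Vpure : pure_isometry ip V.

Lemma wold_cvg0 y : nsq_cvg ip (fun k => iter k V (iter k Vs y)) 0.
Proof.
have [l yl] := hilbert_complete ipP Hhilbert (wold_cauchy y).
have nsq_proj N x : nsq ((iter N V \o iter N Vs) x) <= 1 * nsq x.
  by rewrite mul1r /= nsq_iter_iso nsq_iter_adj_le.
suff l0 : l = 0 by rewrite -l0.
(* l lies in the subspace on which V is unitary, which purity makes trivial. *)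
case: Vpure => _ /(_ (fun x => forall N, iter N V (iter N Vs x) = x)).
apply=> [|x fix_x [|N] //|x fix_x|].
- split=> [N|c a b fix_a fix_b N|u l' fix_u /(converges_toP ipP) ul' N].
  + by rewrite !linear0.
  + by rewrite !linearP /= fix_a fix_b.
  + exact: (nsq_cvg_map_lim ipP ler01 (nsq_proj N) (fun m _ => fix_u m N) ul' ul').
- by rewrite [iter _ Vs _]iterSr adj_isoK iterS fix_x.
- exists (Vs x); last exact: fix_x 1%N.
  move=> N; have := fix_x N.+1; rewrite [iter N.+1 V _]iterS iterSr.
  by move=> /(congr1 Vs); rewrite adj_isoK.
- move=> N; apply: (nsq_cvg_map_lim (N := N) ipP ler01 (nsq_proj N) _ yl yl).
  move=> m Nm /=; have := iterD N (m - N) V (iter m Vs y).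
  by rewrite subnKC // => ->; rewrite iter_adj_isoK // subnn.
Qed.

End Isometry.

Definition bounded_onto (R : realType) (H : lmodType R[i]) (ip : H -> H -> R[i])
    (T : H -> H) (S : H -> Prop) (K : R) :=
  forall y, S y -> exists x, [/\ S x, T x = y & nsq ip x <= K * nsq ip y].

Section Lift.
Variables (R : realType) (H : lmodType R[i]) (ip : H -> H -> R[i]).
Hypothesis Hhilbert : hilbert_space ip.
Let ipP : inner_product ip := Hhilbert.1.
Local Notation nsq := (nsq ip).
Variables V Vs T : {linear H -> H}.
Hypothesis Viso : Defs.isometry ip V.
Hypothesis Vadj : is_adjoint ip V Vs.
Hypothesis Vpure : pure_isometry ip V.
Variable B : R.
Hypothesis B0 : 0 <= B.
Hypothesis TB : forall x, nsq (T x) <= B * nsq x.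
Variable tau : R[i].
Hypothesis tau1 : `|tau| = 1.
Hypothesis TV : forall x, T (V x) = tau *: V (T x).
Variable S : H -> Prop.
Hypothesis Sclosed : closed_subspace ip S.
Hypothesis SV : forall x, S x -> S (V x).
Hypothesis SVs : forall x, S x -> S (Vs x).

Let Ssub : subspace S := closed_subspace_subspace Sclosed.

Lemma iter_TV k x : T (iter k V x) = tau ^+ k *: iter k V (T x).
Proof.
elim: k => [|k IH]; first by rewrite scale1r.
by rewrite !iterS TV IH linearZ /= scalerA exprS.
Qed.

Lemma bounded_onto_lift K : 0 <= K ->
  bounded_onto ip T (fun x => S x /\ Vs x = 0) K -> bounded_onto ip T S (2 * K).
Proof.
move=> K0 onto_ker y Sy.
have Swold k : S (wold_term V Vs y k) /\ Vs (wold_term V Vs y k) = 0.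
  split; last exact: (adj_wold_term ipP Viso Vadj).
  by apply: (subspaceB Ssub); [|apply: SV]; apply: iter_stable.
have [x_ x_P] := choice (fun k => onto_ker _ (Swold k)).
pose a k := tau^* ^+ k *: x_ k.
have a0 k : Vs (a k) = 0.
  by case: (x_P k) => -[_ x0] _ _; rewrite linearZ /= x0 scaler0.
have nsq_a k : nsq (a k) <= K * nsq (wold_term V Vs y k).
  rewrite /a (nsqZ_unit ipP); last by rewrite normrX norm_conjC tau1 expr1n.
  by case: (x_P k).
have [x [Xx xK]] := wandering_series ipP Viso Vadj Hhilbert K0 a0 nsq_a.
have TX N : T (\sum_(0 <= k < N) iter k V (a k)) = y - iter N V (iter N Vs y).
  rewrite linear_sum -[y in y - _]/(iter 0 V (iter 0 Vs y)) -wold_sum //.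
  apply: eq_bigr => k _; rewrite /= !linearZ /= iter_TV scalerA mulrC -exprMn.
  by rewrite -normCK tau1 !expr1n scale1r; case: (x_P k) => _ ->.
exists x; split=> //.
- apply: (closed_subspace_lim ipP Sclosed) _ Xx => N.
  apply: (subspace_sum Ssub) => k _; apply: iter_stable SV _.
  by apply: (subspaceZ Ssub); case: (x_P k) => -[].
apply: (nsq_cvg_map_lim (N := 0%N) ipP B0 TB (fun m _ => TX m) Xx).
move=> e /(wold_cvg0 ipP Viso Vadj Hhilbert Vpure y) [N hN]; exists N => m /hN.
by rewrite addrAC subrr add0r (nsqN ipP) subr0.
Qed.

End Lift.

Section Orthonormal.
Variables (R : realType) (H : lmodType R[i]) (ip : H -> H -> R[i]).
Hypothesis ipP : inner_product ip.

Definition orthonormal (e : seq H) :=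
  forall j k, (j < size e)%N -> (k < size e)%N -> ip e`_j e`_k = (j == k)%:R.

Lemma orthonormal_cons v e : orthonormal e -> ip v v = 1 ->
  (forall j, (j < size e)%N -> ip v e`_j = 0) -> orthonormal (v :: e).
Proof.
move=> eo v1 ve [|j] [|k] //=; rewrite !ltnS => hj hk; rewrite ?eo //.
- by rewrite ve.
- by rewrite (ipC ipP) ve // conjC0.
Qed.

Lemma bessel u v : ip v v = 1 -> `|ip u v| <= hnorm ip u.
Proof.
move=> v1; rewrite -ler_sqr ?nnegrE ?normr_ge0 ?(hnorm_ge0 ipP) //.
rewrite normCK -(ip_hnorm ipP) -subr_ge0.
have -> : ip u u - ip u v * (ip u v)^* =
    ip (u + (- ip u v) *: v) (u + (- ip u v) *: v).
  by rewrite (ip_selfDZ ipP) v1 (ipC ipP u v) rmorphN /=; ring.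
exact: ip_ge0.
Qed.

Variable e : seq H.
Hypothesis eo : orthonormal e.

Lemma ip_comb_nth (F : 'I_(size e) -> R[i]) (j : 'I_(size e)) :
  ip (\sum_(k < size e) F k *: e`_k) e`_j = F j.
Proof.
rewrite (ip_suml ipP) (bigD1 j) //= (ipZl ipP) eo // eqxx mulr1 big1 ?addr0 //.
by move=> k; rewrite -val_eqE => /negbTE kj; rewrite (ipZl ipP) eo // kj mulr0.
Qed.

Lemma ip_comb (F G : 'I_(size e) -> R[i]) :
  ip (\sum_(k < size e) F k *: e`_k) (\sum_(k < size e) G k *: e`_k) =
  \sum_(k < size e) F k * (G k)^*.
Proof.
rewrite (ip_sumr ipP); apply: eq_bigr => k _.
by rewrite (ipZr ipP) ip_comb_nth mulrC.
Qed.

Lemma span_expand x : span e x -> x = \sum_(k < size e) ip x e`_k *: e`_k.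
Proof. by case=> c ->; apply: eq_bigr => k _; rewrite ip_comb_nth. Qed.

Lemma orthonormal_extend w : ~ span e w ->
  exists v, [/\ orthonormal (v :: e), span (v :: e) w & span (w :: e) v].
Proof.
move=> nsw; pose p := \sum_(k < size e) ip w e`_k *: e`_k.
have ep : span e p by exists (fun k => ip w e`_k).
pose f := w - p.
have f_orth j : (j < size e)%N -> ip f e`_j = 0.
  by move=> hj; rewrite (ipBl ipP) -[j]/(val (Ordinal hj)) ip_comb_nth ?subrr.
have nf0 : hnorm ip f != 0.
  apply/eqP => f0; apply: nsw; suff -> : w = p by [].
  by apply/subr0_eq/(ip_eq0 ipP); rewrite (ip_hnorm ipP) f0 expr0n.
pose v := (hnorm ip f)^-1 *: f.
have v1 : ip v v = 1.
  rewrite (ipZl ipP) (ipZr ipP) (ip_hnorm ipP) fmorphV /=.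
  by rewrite conj_Creal ?ger0_real ?(hnorm_ge0 ipP) //; field.
exists v; split.
- by apply: orthonormal_cons => // j hj; rewrite (ipZl ipP) f_orth ?mulr0.
- have -> : w = hnorm ip f *: v + p by rewrite scalerA divff // scale1r subrK.
  apply: (subspaceP (span_subspace _)) (span_cons v ep).
  exact: (@mem_span _ _ (v :: e) ord0).
apply: (subspaceZ (span_subspace _)); apply: (subspaceB (span_subspace _)).
  exact: (@mem_span _ _ (w :: e) ord0).
exact: span_cons.
Qed.

End Orthonormal.

Lemma orthonormal_basis (R : realType) (H : lmodType R[i]) (ip : H -> H -> R[i])
    (s : seq H) (W : H -> Prop) :
  inner_product ip -> subspace W -> (forall x, W x -> span s x) ->
  exists e, [/\ forall k : 'I_(size e), W e`_k, orthonormal ip e &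
                forall x, W x -> span e x].
Proof.
move=> ipP; elim: s W => [|a s IH] W Wsub Ws; first by exists [::]; split=> // -[].
have [e' [e'W e'o We']] :=
  IH _ (subspaceI Wsub (span_subspace s)) (fun x => @proj2 _ _).
have e's : forall x, span e' x -> span s x.
  by apply: span_min (span_subspace s) _ => k; case: (e'W k).
have [Ws'|/existsNP [w /not_implyP [Ww nsw]]] := EM (forall x, W x -> span s x).
  exists e'; split=> // [k | x Wx]; first by case: (e'W k).
  by apply: We'; split; last exact: Ws'.
have [v [vo vw wv]] := orthonormal_extend ipP e'o (fun e'w => nsw (e's w e'w)).
exists (v :: e'); split=> //.
- case=> -[|k] hk /=; last by case: (e'W (@Ordinal (size e') k hk)).
  apply: span_min Wsub _ _ wv => -[[|j] hj] /=; first exact: Ww.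
  by case: (e'W (@Ordinal (size e') j hj)).
move=> x Wx; have [g xg] := span_exchange (Ws x Wx) (Ws w Ww) nsw.
have e'x : span e' (x - g *: w).
  by apply: We'; split=> //; apply: (subspaceB Wsub) Wx (subspaceZ Wsub _ Ww).
rewrite -(subrK (g *: w) x).
apply: (subspaceD (span_subspace _)) (span_cons v e'x) _.
exact: (subspaceZ (span_subspace _) _ vw).
Qed.

Section FiniteDim.
Variables (R : realType) (H : lmodType R[i]) (ip : H -> H -> R[i]).
Hypothesis ipP : inner_product ip.
Variable e : seq H.
Hypothesis eo : orthonormal ip e.
Variable T : {linear H -> H}.
Hypothesis Te : forall k : 'I_(size e), span e (T e`_k).
Hypothesis Tinj : forall x, span e x -> T x = 0 -> x = 0.

Local Notation d := (size e).

Definition lincomb (c : 'rV[R[i]]_d) := \sum_(k < d) c 0 k *: e`_k.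

Definition coord_mx : 'M[R[i]]_d := \matrix_(k, j) ip (T e`_k) e`_j.

Lemma T_lincomb c : T (lincomb c) = lincomb (c *m coord_mx).
Proof.
rewrite linear_sum /=.
under eq_bigr => k _ do
  rewrite linearZ /= [T e`_k](span_expand ipP eo (Te k)) scaler_sumr.
rewrite exchange_big /=; apply: eq_bigr => j _.
by rewrite !mxE scaler_suml; apply: eq_bigr => k _; rewrite scalerA !mxE.
Qed.

Lemma coord_mx_unit : coord_mx \in unitmx.
Proof.
rewrite -row_free_unit -kermx_eq0; apply/eqP/row_matrixP => i; rewrite row0.
set r := row i (kermx coord_mx).
have r0 : lincomb r = 0.
  apply: Tinj; first by exists (r 0).
  rewrite T_lincomb -row_mul mulmx_ker row0 /lincomb big1 // => k _.
  by rewrite mxE scale0r.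
apply/rowP => j; have := ip_comb_nth ipP eo (r 0) j.
by rewrite -/(lincomb r) r0 (ip0l ipP) => rj; rewrite -rj mxE.
Qed.

Lemma orthonormal_bounded_onto : exists K, 0 <= K /\ bounded_onto ip T (span e) K.
Proof.
pose L (k : 'I_d) := \sum_(j < d) `|invmx coord_mx j k|.
pose K := \sum_(k < d) L k ^+ 2.
have K0 : 0 <= K by apply: sumr_ge0 => k _; rewrite exprn_ge0 // sumr_ge0.
exists (complex.Re K); split; first by rewrite -ler0c RRe_real ?ger0_real.
move=> u eu; pose b : 'rV_d := \row_j ip u e`_j; pose c := b *m invmx coord_mx.
exists (lincomb c); split; first by exists (c 0).
  rewrite T_lincomb mulmxKV ?coord_mx_unit // [RHS](span_expand ipP eo eu).
  by apply: eq_bigr => k _; rewrite mxE.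
have c_le k : `|c 0 k| <= hnorm ip u * L k.
  rewrite mxE /L mulr_sumr (le_trans (ler_norm_sum _ _ _)) // ler_sum // => j _.
  by rewrite normrM ler_wpM2r // mxE bessel // eo // eqxx.
have : ip (lincomb c) (lincomb c) <= ip u u * K.
  rewrite (ip_comb ipP eo) /K mulr_sumr ler_sum // => k _.
  rewrite -normCK (ip_hnorm ipP) -exprMn lerXn2r ?nnegrE ?c_le //.
  by rewrite mulr_ge0 ?sumr_ge0 ?(hnorm_ge0 ipP).
by rewrite !(ip_nsq ipP) -{1}(RRe_real (ger0_real K0)) -rmorphM lecR mulrC.
Qed.

End FiniteDim.

Lemma finite_dim_bounded_onto (R : realType) (H : lmodType R[i])
    (ip : H -> H -> R[i]) (T : {linear H -> H}) (W : H -> Prop) (s : seq H) :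
  inner_product ip -> subspace W -> (forall x, W x -> span s x) ->
  (forall x, W x -> W (T x)) -> (forall x, W x -> T x = 0 -> x = 0) ->
  exists K, 0 <= K /\ bounded_onto ip T W K.
Proof.
move=> ipP Wsub Ws WT Tinj.
have [e [eW eo We]] := orthonormal_basis ipP Wsub Ws.
have eW' : forall x, span e x -> W x := span_min Wsub eW.
have [k|x /eW' Wx|K [K0 onto]] := orthonormal_bounded_onto ipP eo (T := T).
- exact/We/WT/eW.
- exact: Tinj.
exists K; split=> // y /We /onto [x [ex Tx xK]].
by exists x; split=> //; apply: eW'.
Qed.

Lemma iso_comm_of_adj (R : realType) (H : lmodType R[i]) (ip : H -> H -> R[i])
    (V Vs W : {linear H -> H}) (c : R[i]) :
  inner_product ip -> Defs.isometry ip V -> is_adjoint ip V Vs ->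
  Defs.isometry ip W -> `|c| = 1 ->
  (forall x, Vs (W x) = c^* *: W (Vs x)) -> forall u, W (V u) = c^* *: V (W u).
Proof.
move=> ipP Viso Vadj Wiso c1 VsW u.
apply: (ip_eq_scale ipP); first by rewrite norm_conjC.
  by rewrite !(ip_iso ipP Wiso, ip_iso ipP Viso).
rewrite (ipC ipP) Vadj VsW (adj_isoK ipP Viso Vadj) (ipZr ipP) conjCK.
rewrite !(ip_iso ipP Wiso, ip_iso ipP Viso) rmorphM /=.
by rewrite (conj_Creal (ger0_real (ip_ge0 ipP u))).
Qed.

Section DoublyNoncommuting.
Variables (R : realType) (H : lmodType R[i]) (ip : H -> H -> R[i]) (n : nat).
Variables (z : 'I_n -> 'I_n -> R[i]) (V Vs : 'I_n -> {linear H -> H}).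
Hypothesis ipP : inner_product ip.
Hypothesis z1 : forall i j, i != j -> `|z i j| = 1.
Hypothesis Viso : forall i, Defs.isometry ip (V i).
Hypothesis Vadj : forall i, is_adjoint ip (V i) (Vs i).
Hypothesis Vcomm :
  forall i j, i != j -> forall x, Vs i (V j x) = (z i j)^* *: V j (Vs i x).

Lemma V_commute i j : i != j -> forall u, V j (V i u) = (z i j)^* *: V i (V j u).
Proof.
by move=> ij; apply: iso_comm_of_adj (Viso i) (Vadj i) (Viso j) (z1 ij) (Vcomm ij).
Qed.

Definition tail_ker m x := forall i : 'I_n, (m <= i)%N -> Vs i x = 0.

Lemma tail_ker_closed m : closed_subspace ip (tail_ker m).
Proof.
split=> [i _|c a b Ka Kb i mi|u l Ku /(converges_toP ipP) ul i mi].
- by rewrite linear0.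
- by rewrite linearP /= Ka // Kb // scaler0 addr0.
apply: (nsq_cvg_map_lim (N := 0%N) ipP ler01 _ _ ul (nsq_cvg_cst ipP 0)) => [x|k _].
  by rewrite mul1r (nsq_adj_le ipP (Viso i) (Vadj i)).
exact: Ku.
Qed.

Lemma tail_ker_iso m (i : 'I_n) :
  (i < m)%N -> forall x, tail_ker m x -> tail_ker m (V i x).
Proof.
move=> im x Kx k mk; have ki : k != i by rewrite neq_ltn (leq_trans im mk) orbT.
by rewrite Vcomm // Kx // linear0 scaler0.
Qed.

Lemma tail_ker_adj m (i : 'I_n) :
  (i < m)%N -> forall x, tail_ker m x -> tail_ker m (Vs i x).
Proof.
move=> im x Kx k mk; have ki : k != i by rewrite neq_ltn (leq_trans im mk) orbT.
apply: (ip_eq0 ipP); rewrite -Vadj -Vadj V_commute // (ipZl ipP) Vadj.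
by rewrite (Kx k mk) (ip0r ipP) mulr0.
Qed.

Variables (T : {linear H -> H}) (tau : 'I_n -> R[i]).
Hypothesis Hhilbert : hilbert_space ip.
Hypothesis Vpure : forall i, pure_isometry ip (V i).
Hypothesis Tbounded : bounded ip T.
Hypothesis tau1 : forall i, `|tau i| = 1.
Hypothesis TV : forall i x, T (V i x) = tau i *: V i (T x).
Hypothesis Tker : forall i x, Vs i x = 0 -> Vs i (T x) = 0.
Hypothesis Tinj : forall x, (forall i, Vs i x = 0) -> T x = 0 -> x = 0.
Hypothesis ker_fin : finite_dimensional (fun x => forall i, Vs i x = 0).

Lemma tail_kerS m (i : 'I_n) :
  val i = m -> (fun x => tail_ker m.+1 x /\ Vs i x = 0) = tail_ker m.
Proof.
move=> im; apply/funext => x; apply/propext; split=> [[Kx Vsx] k|Kx].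
  rewrite leq_eqVlt => /orP[/eqP mk|]; last exact: Kx.
  by rewrite (_ : k = i) //; apply: val_inj; rewrite im.
by split=> [k mk|]; apply: Kx; rewrite ?im // ltnW.
Qed.

Lemma tail_ker_bounded_onto m : (m <= n)%N ->
  exists K, 0 <= K /\ bounded_onto ip T (tail_ker m) K.
Proof.
elim: m => [_|m IH mn].
  have [s Ks] := ker_fin.
  apply: (finite_dim_bounded_onto (s := s) ipP
    (closed_subspace_subspace (tail_ker_closed 0))).
  - by move=> x K0x; have [c ->] := Ks x (fun i => K0x i isT); exists (fun k => c k).
  - by move=> x K0x i _; apply/Tker/K0x.
  - by move=> x K0x; apply: Tinj => i; apply: K0x.
have [K [K0 onto]] := IH (ltnW mn).
have [B [B0 TB]] := bounded_nsq ipP Tbounded.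
pose i := Ordinal mn.
exists (2 * K); split; first by rewrite mulr_ge0.
apply: (bounded_onto_lift Hhilbert (Viso i) (Vadj i) (Vpure i) B0 TB (tau1 i)
  (TV i) (tail_ker_closed m.+1) (@tail_ker_iso _ i (ltnSn m))
  (@tail_ker_adj _ i (ltnSn m)) K0).
by rewrite (@tail_kerS m i erefl).
Qed.

End DoublyNoncommuting.

Theorem lemma3p11 (R : realType) (H : lmodType R[i]) (ip : H -> H -> R[i])
    (n : nat) (z : 'I_n -> 'I_n -> R[i]) (V Vs : 'I_n -> {linear H -> H})
    (T : {linear H -> H}) (tau : 'I_n -> R[i]) :
  (0 < n)%N ->
  hilbert_space ip ->
  doubly_noncommuting ip z (fun i => V i : H -> H) (fun i => Vs i : H -> H) ->
  (forall i, pure_isometry ip (V i)) ->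
  finite_dimensional (fun x => forall i, Vs i x = 0) ->
  bounded ip T ->
  (forall i, `|tau i| = 1) ->
  (forall i x, T (V i x) = tau i *: V i (T x)) ->
  (forall i x, Vs i x = 0 -> Vs i (T x) = 0) ->
  (forall x, (forall i, Vs i x = 0) -> T x = 0 -> x = 0) ->
  forall y : H, exists x : H, T x = y.
Proof.
move=> _ Hhilbert [z1 _ Viso Vadj Vcomm] Vpure ker_fin Tbounded tau1 TV Tker Tinj y.
have [K [_ onto]] := tail_ker_bounded_onto Hhilbert.1 z1 Viso Vadj Vcomm Hhilbert
  Vpure Tbounded tau1 TV Tker Tinj ker_fin (leqnn n).
have [|x [_ Tx _]] := onto y; last by exists x.
by move=> i; rewrite leqNgt ltn_ord.
Qed.
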